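(* For all integers $n \geq 0$ and $0 \leq k \leq n$, $$(-1)^k\, 2^{-2n}\binom{2n+1}{n-k}(2k+1) = (2n+1)\sum_{j=k}^{n}(-1)^j\, 2^{-2j}\binom{n}{j}\binom{2j+1}{j-k}.$$ *)

From HB Require Import structures.
From mathcomp Require Import all_boot all_order all_algebra.

From HB Require Import structures.
From mathcomp Require Import all_boot all_order all_algebra.
From mathcomp Require Import zify ring.
Import Order.TTheory GRing.Theory Num.Theory.
Local Open Scope ring_scope.

(* Proof by a generating polynomial.  Let
     G_n(X) = (1 + X) * (4X - (1 + X)^2)^n.
   Expanding the n-th power by the binomial theorem, the term of index j is
   C(n,j) 4^(n-j) (-1)^j X^(n-j) (1+X)^(2j+1), so the coefficient of X^(n-k)
   in G_n is  sum_{j=k}^n (-1)^j 4^(n-j) C(n,j) C(2j+1, j-k)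
   (coef_gen_poly_sum).  On the other hand 4X - (1+X)^2 = -(1-X)^2, so
   G_n = (-1)^n (1+X)(1-X)^(2n), whose coefficient of X^(n-k) is
   (-1)^k (C(2n, n-k) - C(2n, n-k-1)) (coef_gen_poly_closed).  A ballot-type
   identity turns (2n+1) times this difference of binomials into
   (2k+1) C(2n+1, n-k) (binomial_ballot).  The theorem is the equality of the
   two coefficient formulas, after writing 2^(-2j) = 4^(-n) 4^(n-j). *)

Lemma coef_1addZX_exp (R : comNzRingType) (c : R) (m i : nat) :
  ((1 + c *: 'X : {poly R}) ^+ m)`_i = c ^+ i * 'C(m, i)%:R.
Proof.
elim: m i => [|m IHm] i.
  by rewrite expr0 coefC; case: i => [|i]; rewrite ?expr0 ?bin0 ?mulr1 ?mulr0.
rewrite exprSr mulrDr mulr1 -scalerAr coefD coefZ coefMX IHm.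
case: i => [|i] /=; first by rewrite !bin0 mulr0 addr0.
by rewrite IHm binS natrD mulrDr exprS mulrA.
Qed.

Lemma coef_1addX_exp (R : comNzRingType) (m i : nat) :
  ((1 + 'X : {poly R}) ^+ m)`_i = 'C(m, i)%:R.
Proof. by rewrite -[X in 1 + X]scale1r coef_1addZX_exp expr1n mul1r. Qed.

Lemma coef_1subX_exp (R : comNzRingType) (m i : nat) :
  ((1 - 'X : {poly R}) ^+ m)`_i = (-1) ^+ i * 'C(m, i)%:R.
Proof. by rewrite -scaleN1r coef_1addZX_exp. Qed.

Definition gen_poly (R : comNzRingType) (n : nat) : {poly R} :=
  (1 + 'X) * ('X *+ 4 - (1 + 'X) ^+ 2) ^+ n.

Definition binom_diff (R : pzRingType) (N m : nat) : R :=
  'C(N, m)%:R - (if m is m'.+1 then 'C(N, m')%:R else 0).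

(* Ballot-type identity: with n = k + m,
   (2k+1) C(2n+1, m) = (2n+1) (C(2n, m) - C(2n, m-1)).  It follows from
   Pascal's rule and (2n+1) C(2n, m-1) = m C(2n+1, m). *)
Lemma binomial_ballot (R : pzRingType) (k m : nat) :
  (2 * k + 1)%:R * 'C(2 * (k + m) + 1, m)%:R
  = (2 * (k + m) + 1)%:R * binom_diff R (2 * (k + m)) m.
Proof.
rewrite /binom_diff; case: m => [|m]; first by rewrite !bin0 !addn0 subr0.
set N := (2 * (k + m.+1))%N.
have diag := mul_bin_diag N.+1 m; rewrite /= binS in diag.
have nat_id : ((2 * k + 1) * 'C(N + 1, m.+1) + (N + 1) * 'C(N, m)
               = (N + 1) * 'C(N, m.+1))%N.
  by rewrite !addn1 binS; nia.
by rewrite mulrBr -!natrM -nat_id natrD addrK.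
Qed.

(* First description of [X^(n-k)] G_n: expand the n-th power binomially;
   the terms with j < k have too high a power of X to contribute. *)
Lemma coef_gen_poly_sum (R : comNzRingType) (n k : nat) : (k <= n)%N ->
  (gen_poly R n)`_(n - k)
  = \sum_(k <= j < n.+1) (-1) ^+ j * 4 ^+ (n - j) * 'C(n, j)%:R * 'C(2 * j + 1, j - k)%:R.
Proof.
move=> le_kn.
have term_eq (j : nat) :
    (1 + 'X) * (('X *+ 4) ^+ (n - j) * (- (1 + 'X) ^+ 2) ^+ j *+ 'C(n, j))
    = (4 ^+ (n - j) * (-1) ^+ j * 'C(n, j)%:R : R) *: ('X ^+ (n - j) * (1 + 'X) ^+ (2 * j + 1)).
  rewrite -!scaler_nat -scaleN1r !exprZn -exprM addn1 exprS.
  rewrite -!mul_polyC !polyCM.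
  ring.
rewrite /gen_poly exprDn mulr_sumr coef_sum big_geq_mkord [RHS]big_mkcond /=.
apply: eq_bigr => j _; rewrite term_eq coefZ coefXnM.
have le_jn : (j <= n)%N by rewrite -ltnS.
rewrite ltn_sub2lE //; case: leqP => [le_kj | lt_jk]; last by rewrite mulr0.
have -> : (n - k - (n - j) = j - k)%N by lia.
by rewrite coef_1addX_exp; ring.
Qed.

Lemma gen_poly_closed (R : comNzRingType) (n : nat) :
  gen_poly R n = (-1) ^+ n *: ((1 + 'X) * (1 - 'X) ^+ (2 * n)).
Proof.
rewrite /gen_poly.
have -> : 'X *+ 4 - (1 + 'X) ^+ 2 = - (1 - 'X) ^+ 2 :> {poly R} by ring.
by rewrite -scaleN1r exprZn -exprM mulnC scalerAr.
Qed.

Lemma coef_gen_poly_closed (R : comNzRingType) (k m : nat) :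
  (gen_poly R (k + m))`_m = (-1) ^+ k * binom_diff R (2 * (k + m)) m.
Proof.
rewrite gen_poly_closed coefZ mulrDl mul1r coefD coefXM !coef_1subX_exp /binom_diff.
case: m => [|m] /=; first by rewrite !addn0 subr0 addr0 mul1r.
have sign_sq : (-1) ^+ m * (-1) ^+ m = 1 :> R.
  by rewrite -exprD addnn -mul2n exprM sqrrN !expr1n.
rewrite exprD !exprS; set s := (-1) ^+ m.
transitivity ((-1) ^+ k * (s * s) * ('C(2 * (k + m.+1), m.+1)%:R - 'C(2 * (k + m.+1), m)%:R) : R).
  ring.
by rewrite sign_sq mulr1.
Qed.

Theorem mainTheorem12 (n k : nat) (hk : (k <= n)%N) :
  (-1 : rat) ^+ k * (2 ^+ (2 * n))^-1 * ('C(2 * n + 1, n - k))%:R * (2 * k + 1)%:R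
  = (2 * n + 1)%:R *
    \sum_(k <= j < n.+1) (-1 : rat) ^+ j * (2 ^+ (2 * j))^-1
        * ('C(n, j))%:R * ('C(2 * j + 1, j - k))%:R.
Proof.
have pow4 (j : nat) : (2 : rat) ^+ (2 * j) = 4 ^+ j by rewrite exprM -natrX.
have rescale (j : nat) : (j <= n)%N -> (4 ^+ j)^-1 = (4 ^+ n)^-1 * 4 ^+ (n - j) :> rat.
  move=> le_jn; rewrite -{1}(subnKC le_jn) exprD invfM -mulrA mulVf ?mulr1 //.
  exact: expf_neq0.
rewrite (eq_big_nat _ _ (F2 := fun j => (4 ^+ n)^-1 *
   ((-1) ^+ j * 4 ^+ (n - j) * 'C(n, j)%:R * 'C(2 * j + 1, j - k)%:R))); last first.
  move=> j /andP[_ lt_jn]; rewrite pow4 (rescale j); last by rewrite -ltnS.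
  ring.
rewrite -mulr_sumr -coef_gen_poly_sum // pow4.
have [m ->] : exists m, n = (k + m)%N by exists (n - k)%N; rewrite subnKC.
rewrite addKn coef_gen_poly_closed.
transitivity ((-1) ^+ k * (4 ^+ (k + m))^-1 *
              ((2 * k + 1)%:R * 'C(2 * (k + m) + 1, m)%:R) : rat); first ring.
by rewrite binomial_ballot; ring.
Qed.
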